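(* Let $\mathbf{X}=[\mathbf{x}_1,\dots,\mathbf{x}_T]\in\mathbb{R}^{N\times T}$ be a dataset and $\boldsymbol{\Pi}\in\mathbb{R}^{N\times N}$ a permutation matrix, and set $\bar{\mathbf{X}}=\boldsymbol{\Pi}\mathbf{X}$. Let $\Phi$ denote the covariance scattering transform (CST) built from $\mathbf{X}$ and $\bar\Phi$ the CST built from $\bar{\mathbf{X}}$, both with the same wavelet functions $h_0,\dots,h_{J-1}$, the same number of layers $L$, the same nonlinearity $\rho$, the same choice of operator type and the same map $U$ (see context). Then for every signal $\mathbf{x}\in\mathbb{R}^N$: (i) if $U:\mathbb{R}^N\to\mathbb{R}^N$ is permutation equivariant, i.e. $U(\boldsymbol{\Pi}\mathbf{y})=\boldsymbol{\Pi}U(\mathbf{y})$ for all $\mathbf{y}$ and all permutation matrices $\boldsymbol{\Pi}$ (e.g. the identity), then $\bar\Phi(\boldsymbol{\Pi}\mathbf{x})=\operatorname{Perm}(\Phi(\mathbf{x}),\boldsymbol{\Pi})$; (ii) if $U$ is permutation invariant, i.e. $U(\boldsymbol{\Pi}\mathbf{y})=U(\mathbf{y})$ for all $\mathbf{y}$ and all permutation matrices (e.g. the average $U(\mathbf{y})=\frac1N\mathbf{1}^\top\mathbf{y}$), then $\bar\Phi(\boldsymbol{\Pi}\mathbf{x})=\Phi(\mathbf{x})$.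
   Context: For a dataset $\mathbf{X}=[\mathbf{x}_1,\dots,\mathbf{x}_T]$, the sample mean is $\hat{\boldsymbol\mu}=\frac1T\sum_t\mathbf{x}_t$ and the sample covariance is $\hat{\mathbf{C}}=\frac1T\sum_{t=1}^T(\mathbf{x}_t-\hat{\boldsymbol\mu})(\mathbf{x}_t-\hat{\boldsymbol\mu})^\top$, with largest eigenvalue $\hat w_1>0$. Fix $\gamma>0$. The covariance wavelet operator is either $\hat{\mathbf{T}}=\gamma\hat{\mathbf{C}}/\hat w_1$ or $\hat{\mathbf{T}}=\gamma(\mathbf{I}-\hat{\mathbf{C}}/\hat w_1)$ (the same choice is made for both datasets). For a symmetric matrix $\mathbf{T}=\mathbf{V}\boldsymbol\Lambda\mathbf{V}^\top$ with eigenvalues $\lambda_1,\dots,\lambda_N$ and a fixed function $h:\mathbb{R}\to\mathbb{R}$, the covariance wavelet is $\mathbf{H}(\mathbf{T})=\mathbf{V}\operatorname{diag}(h(\lambda_1),\dots,h(\lambda_N))\mathbf{V}^\top$. Given fixed wavelet functions $h_0,\dots,h_{J-1}$ (not depending on the data), write $\mathbf{H}_j=\mathbf{H}_j(\hat{\mathbf{T}})$. With $\rho:\mathbb{R}\to\mathbb{R}$ applied entrywise, the scattering features of a signal $\mathbf{x}$ are defined recursively by $\mathbf{x}_{()}=\mathbf{x}$ and $\mathbf{x}_{(j_\ell,\dots,j_1)}=\rho(\mathbf{H}_{j_\ell}\mathbf{x}_{(j_{\ell-1},\dots,j_1)})$ for $j_i\in\{0,\dots,J-1\}$, i.e. $\mathbf{x}_{(j_\ell,\dots,j_1)}=\rho(\mathbf{H}_{j_\ell}\rho(\mathbf{H}_{j_{\ell-1}}\cdots\rho(\mathbf{H}_{j_1}\mathbf{x})))$.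 The CST $\Phi(\mathbf{x})$ is the concatenation (in a fixed order of index tuples) of $U\mathbf{x}_{(j_\ell,\dots,j_1)}$ over all layers $\ell=0,\dots,L-1$ and all tuples $(j_\ell,\dots,j_1)\in\{0,\dots,J-1\}^\ell$. When $U$ maps $\mathbb{R}^N$ to $\mathbb{R}^N$, the CST permutation operator is $\operatorname{Perm}(\Phi(\mathbf{x}),\boldsymbol\Pi)=[\boldsymbol\Pi U\mathbf{x}\,\|\,\boldsymbol\Pi U\mathbf{x}_{(0)}\,\|\cdots]$, i.e. each concatenated block $U\mathbf{x}_{(j_\ell,\dots,j_1)}$ is replaced by $\boldsymbol\Pi U\mathbf{x}_{(j_\ell,\dots,j_1)}$. *)

From HB Require Import structures.
From mathcomp Require Import all_boot all_order all_algebra all_fingroup.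
From mathcomp Require Import reals.
From Stdlib Require Import ClassicalEpsilon.
Set Implicit Arguments. Unset Strict Implicit. Unset Printing Implicit Defensive.
Import Order.TTheory GRing.Theory Num.Theory.
Local Open Scope ring_scope.

Definition pick_or (A : Type) (d : A) (P : A -> Prop) : A :=
  match excluded_middle_informative (exists x, P x) with
  | left h => proj1_sig (constructive_indefinite_description P h)
  | right _ => d
  end.

Section Defs.
Variable R : realType.

Definition is_spec_dec n (A V : 'M[R]_n) (d : 'rV[R]_n) : Prop :=
  V^T *m V = 1%:M /\ A = V *m diag_mx d *m V^T.

Definition cov_wavelet n (h : R -> R) (A : 'M[R]_n) : 'M[R]_n :=
  let p := pick_or (0, 0) (fun p : 'M[R]_n * 'rV[R]_n => is_spec_dec A p.1 p.2) in
  p.1 *m diag_mx (map_mx h p.2) *m p.1^T.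

(* Largest eigenvalue (default 0 if there is none). *)
Definition largest_eig n (A : 'M[R]_n) : R :=
  pick_or 0 (fun w => eigenvalue A w /\ forall a, eigenvalue A a -> a <= w).

Definition sample_mean N T (X : 'M[R]_(N, T)) : 'cV[R]_N :=
  (T%:R)^-1 *: (X *m const_mx 1).

Definition sample_cov N T (X : 'M[R]_(N, T)) : 'M[R]_N :=
  let Xc := X - sample_mean X *m const_mx 1 in
  (T%:R)^-1 *: (Xc *m Xc^T).

Inductive op_type := OpCov | OpIdMinusCov.

Definition cov_op N T (gamma : R) (ot : op_type) (X : 'M[R]_(N, T)) : 'M[R]_N :=
  let C := sample_cov X in
  let w1 := largest_eig C in
  match ot with
  | OpCov => gamma *: (w1^-1 *: C)
  | OpIdMinusCov => gamma *: (1%:M - w1^-1 *: C)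
  end.

(* Scattering feature for an index path [:: j_1; ...; j_l]:
   x_(j_l,...,j_1) = rho(H_{j_l} ... rho(H_{j_1} x)). *)
Fixpoint scat_feat N J (H : 'I_J -> 'M[R]_N) (rho : R -> R)
    (p : seq 'I_J) (x : 'cV[R]_N) : 'cV[R]_N :=
  match p with
  | [::] => x
  | j :: p' => scat_feat H rho p' (map_mx rho (H j *m x))
  end.

Fixpoint all_paths J (l : nat) : seq (seq 'I_J) :=
  match l with
  | 0 => [:: [::]]
  | l'.+1 => [seq j :: p | j <- enum 'I_J, p <- all_paths J l']
  end.

(* The CST Phi(x): the concatenation, over layers l = 0..L-1 and all tuples
   of length l (fixed order), of the blocks U x_(j_l,...,j_1); represented as
   the list of its blocks. *)
Definition cst N T M J (X : 'M[R]_(N, T)) (gamma : R) (ot : op_type)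
    (h : 'I_J -> R -> R) (L : nat) (rho : R -> R)
    (U : 'cV[R]_N -> 'cV[R]_M) (x : 'cV[R]_N) : seq 'cV[R]_M :=
  let Th := cov_op gamma ot X in
  let H := fun j => cov_wavelet (h j) Th in
  flatten [seq [seq U (scat_feat H rho p x) | p <- all_paths J l] | l <- iota 0 L].

Definition cst_perm N (Phi : seq 'cV[R]_N) (Pi : 'M[R]_N) : seq 'cV[R]_N :=
  [seq Pi *m b | b <- Phi].

End Defs.

(* Relabelling the coordinates by a permutation matrix Pi conjugates the sample
   covariance by the orthogonal matrix Pi.  Orthogonal conjugation preserves the
   spectrum, hence the largest eigenvalue, so it conjugates the operator T-hat
   and with it every covariance wavelet H_j(T-hat): H_j(T-hat) does not depend
   on the chosen eigenbasis, because on the spectrum h_j agrees with a polynomial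
   p_j and H_j(T-hat) = p_j(T-hat).  Since Pi also commutes with the entrywise
   nonlinearity, each scattering feature of Pi x is Pi times the corresponding
   feature of x, and both claims follow by applying U. *)
From HB Require Import structures.
From mathcomp Require Import all_boot all_order all_algebra all_fingroup.
From mathcomp Require Import reals.
From Stdlib Require Import ClassicalEpsilon FunctionalExtensionality.
Set Implicit Arguments. Unset Strict Implicit. Unset Printing Implicit Defensive.
Import Order.TTheory GRing.Theory Num.Theory.
Local Open Scope ring_scope.

Lemma exists_interp_poly (F : fieldType) (f : F -> F) (s : seq F) :
  exists p : {poly F}, {in s, forall x, p.[x] = f x}.
Proof.
elim: s => [|a s [p Hp]]; first by exists 0.
have [as_|as_N] := boolP (a \in s).
  by exists p => x; rewrite inE => /predU1P[->|]; apply: Hp.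
(* [w] vanishes on [s] but not at [a], so a multiple of it corrects the value at [a]. *)
pose w := \prod_(b <- s) ('X - b%:P).
have wa_neq0 : w.[a] != 0.
  by have := root_prod_XsubC s a; rewrite (negbTE as_N) /root => ->.
have ws_eq0 x : x \in s -> w.[x] = 0 by rewrite -root_prod_XsubC => /rootP.
exists (p + ((f a - p.[a]) / w.[a]) *: w) => x; rewrite inE hornerD hornerZ.
case/predU1P => [->|xs]; first by rewrite divfK // addrC subrK.
by rewrite (ws_eq0 x xs) mulr0 addr0 Hp.
Qed.

Lemma horner_mx_orthoconj (R : comNzRingType) n (V A : 'M[R]_n.+1) p :
  V^T *m V = 1%:M -> horner_mx (V *m A *m V^T) p = V *m horner_mx A p *m V^T.
Proof.
move=> VTV; have VVT := mulmx1C VTV.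
elim/poly_ind: p => [|p c IH]; first by rewrite !rmorph0 mulmx0 mul0mx.
rewrite !rmorphD !rmorphM /= !horner_mx_X !horner_mx_C IH -!mulmxE.
rewrite mulmxDr mulmxDl mul_mx_scalar -scalemxAl VVT scalemx1; congr (_ + _).
by rewrite !mulmxA -[V *m _ *m V^T *m V]mulmxA VTV mulmx1.
Qed.

Section SpectralCalculus.
Variable R : realType.

Lemma spec_dec_calculus_uniq n (h : R -> R) (A V1 V2 : 'M[R]_n) d1 d2 :
  is_spec_dec A V1 d1 -> is_spec_dec A V2 d2 ->
  V1 *m diag_mx (map_mx h d1) *m V1^T = V2 *m diag_mx (map_mx h d2) *m V2^T.
Proof.
case: n A V1 V2 d1 d2 => [|n] A V1 V2 d1 d2 [V1TV1 ->] [V2TV2 A2].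
  by apply/matrixP => [[]].
have [p Hp] := exists_interp_poly h ([seq d1 0 i | i <- enum 'I_n.+1] ++
                                      [seq d2 0 i | i <- enum 'I_n.+1]).
have hp_d1 : map_mx h d1 = map_mx (horner p) d1.
  by apply/matrixP => i j; rewrite !mxE (ord1 i) Hp // mem_cat map_f ?mem_enum.
have hp_d2 : map_mx h d2 = map_mx (horner p) d2.
  by apply/matrixP => i j; rewrite !mxE (ord1 i) Hp // mem_cat map_f ?mem_enum ?orbT.
by rewrite hp_d1 hp_d2 -!horner_mx_diag -!horner_mx_orthoconj // -A2.
Qed.

Lemma pick_orP (A : Type) (d : A) (P : A -> Prop) :
  (exists x, P x) -> P (pick_or d P).
Proof.
rewrite /pick_or; case: excluded_middle_informative => // e _.
by case: constructive_indefinite_description.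
Qed.

Lemma pick_or_default (A : Type) (d : A) (P : A -> Prop) :
  ~ (exists x, P x) -> pick_or d P = d.
Proof. by rewrite /pick_or; case: excluded_middle_informative. Qed.

Lemma cov_waveletE n (h : R -> R) (A V : 'M[R]_n) d :
  is_spec_dec A V d -> cov_wavelet h A = V *m diag_mx (map_mx h d) *m V^T.
Proof.
move=> Ad; have pick_dec := @pick_orP _ (0, 0)
  (fun p : 'M_n * 'rV_n => is_spec_dec A p.1 p.2) (ex_intro _ (V, d) Ad).
exact: spec_dec_calculus_uniq pick_dec Ad.
Qed.

Lemma cov_wavelet_no_spec_dec n (h : R -> R) (A : 'M[R]_n) :
  (forall V d, ~ is_spec_dec A V d) -> cov_wavelet h A = 0.
Proof.
move=> noA; rewrite /cov_wavelet pick_or_default; last by case=> -[V d] /noA.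
by rewrite /= !mul0mx.
Qed.

Lemma is_spec_dec_conj n (Q A V : 'M[R]_n) d :
  Q^T *m Q = 1%:M -> is_spec_dec A V d -> is_spec_dec (Q *m A *m Q^T) (Q *m V) d.
Proof.
move=> QTQ [VTV ->]; split; last by rewrite trmx_mul !mulmxA.
by rewrite trmx_mul mulmxA -(mulmxA _ Q^T) QTQ mulmx1 VTV.
Qed.

Lemma cov_wavelet_conj n (h : R -> R) (Q A : 'M[R]_n) :
  Q^T *m Q = 1%:M -> cov_wavelet h (Q *m A *m Q^T) = Q *m cov_wavelet h A *m Q^T.
Proof.
move=> QTQ.
have [[[V d] Ad]|noA] :=
  excluded_middle_informative (exists p, is_spec_dec A p.1 p.2).
  rewrite (cov_waveletE h Ad) (cov_waveletE h (is_spec_dec_conj QTQ Ad)).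
  by rewrite trmx_mul !mulmxA.
have noQA V d : ~ is_spec_dec (Q *m A *m Q^T) V d.
  move=> QAd; apply: noA; exists (Q^T *m V, d).
  have -> : A = Q^T *m (Q *m A *m Q^T) *m Q^T^T.
    by rewrite trmxK !mulmxA QTQ mul1mx -mulmxA QTQ mulmx1.
  by apply: is_spec_dec_conj QAd; rewrite trmxK mulmx1C.
rewrite (cov_wavelet_no_spec_dec _ noQA) cov_wavelet_no_spec_dec ?mulmx0 ?mul0mx //.
by move=> V d Ad; apply: noA; exists (V, d).
Qed.

End SpectralCalculus.

Lemma eigenvalue_conj (F : fieldType) n (Q Qi A : 'M[F]_n) :
  Qi *m Q = 1%:M -> eigenvalue (Q *m A *m Qi) =1 eigenvalue A.
Proof.
move=> QiQ a; have QQi := mulmx1C QiQ.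
apply/eigenvalueP/eigenvalueP => -[v Av v_neq0].
  exists (v *m Q).
    by have := congr1 (mulmx^~ Q) Av; rewrite /= -!mulmxA QiQ mulmx1 -scalemxAl !mulmxA.
  by apply: contraNneq v_neq0 => vQ0; rewrite -[v]mulmx1 -QQi mulmxA vQ0 mul0mx.
exists (v *m Qi).
  by rewrite !mulmxA -(mulmxA v) QiQ mulmx1 Av -scalemxAl.
by apply: contraNneq v_neq0 => vQi0; rewrite -[v]mulmx1 -QiQ mulmxA vQi0 mul0mx.
Qed.

Section CovarianceOperator.
Variable R : realType.

Lemma largest_eig_conj n (Q A : 'M[R]_n) :
  Q^T *m Q = 1%:M -> largest_eig (Q *m A *m Q^T) = largest_eig A.
Proof.
move=> QTQ; rewrite /largest_eig.
by rewrite (functional_extensionality _ _ (eigenvalue_conj A QTQ)).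
Qed.

Lemma sample_cov_mull K N T (Q : 'M[R]_(K, N)) (X : 'M[R]_(N, T)) :
  sample_cov (Q *m X) = Q *m sample_cov X *m Q^T.
Proof.
rewrite /sample_cov /sample_mean.
set c1 : 'M_(T, 1) := const_mx 1; set r1 : 'M_(1, T) := const_mx 1.
have -> : Q *m X - T%:R^-1 *: (Q *m X *m c1) *m r1
        = Q *m (X - T%:R^-1 *: (X *m c1) *m r1).
  by rewrite mulmxBr -!scalemxAl -scalemxAr !mulmxA.
set Y := X - _.
by rewrite trmx_mul -scalemxAr -scalemxAl !mulmxA scalemxAl.
Qed.

Lemma cov_op_conj N T (Q : 'M[R]_N) (X : 'M[R]_(N, T)) gamma ot :
  Q^T *m Q = 1%:M -> cov_op gamma ot (Q *m X) = Q *m cov_op gamma ot X *m Q^T.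
Proof.
move=> QTQ; rewrite /cov_op sample_cov_mull largest_eig_conj //.
move: (sample_cov X) (largest_eig _) => C w.
case: ot; rewrite -!scalemxAr -!scalemxAl //.
by rewrite mulmxBr mulmxBl mulmx1 (mulmx1C QTQ) -!scalemxAr -!scalemxAl.
Qed.

Lemma scat_feat_intertwine N J (Q : 'M[R]_N) (H H' : 'I_J -> 'M[R]_N) rho p x :
  (forall j, H' j *m Q = Q *m H j) ->
  (forall y : 'cV[R]_N, map_mx rho (Q *m y) = Q *m map_mx rho y) ->
  scat_feat H' rho p (Q *m x) = Q *m scat_feat H rho p x.
Proof.
move=> HQ rhoQ; elim: p x => [|j p IH] x //=.
by rewrite mulmxA HQ -mulmxA rhoQ IH.
Qed.

Lemma cst_conj N T M J (Q : 'M[R]_N) (X : 'M[R]_(N, T)) (gamma : R) (ot : op_type)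
    (h : 'I_J -> R -> R) (L : nat) (rho : R -> R)
    (U : 'cV[R]_N -> 'cV[R]_M) (g : 'cV[R]_M -> 'cV[R]_M) x :
  Q^T *m Q = 1%:M ->
  (forall y : 'cV[R]_N, map_mx rho (Q *m y) = Q *m map_mx rho y) ->
  (forall y, U (Q *m y) = g (U y)) ->
  cst (Q *m X) gamma ot h L rho U (Q *m x) = map g (cst X gamma ot h L rho U x).
Proof.
move=> QTQ rhoQ UQ; rewrite /cst cov_op_conj // map_flatten -map_comp.
congr flatten; apply: eq_map => l /=; rewrite -map_comp; apply: eq_map => p /=.
rewrite (scat_feat_intertwine (H := fun j => cov_wavelet (h j) (cov_op gamma ot X))) //.
by move=> j; rewrite cov_wavelet_conj // -mulmxA QTQ mulmx1.
Qed.

End CovarianceOperator.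

Lemma perm_mx_orthogonal (R : pzRingType) n (s : 'S_n) :
  (perm_mx s)^T *m perm_mx s = 1%:M :> 'M[R]_n.
Proof. by rewrite tr_perm_mx -perm_mxM mulVg perm_mx1. Qed.

Lemma map_mx_perm (R : pzSemiRingType) m n (s : 'S_m) (f : R -> R) (A : 'M[R]_(m, n)) :
  map_mx f (perm_mx s *m A) = perm_mx s *m map_mx f A.
Proof. by rewrite -!row_permE map_row_perm. Qed.

Theorem theorem1 (R : realType) (N T J L : nat) (X : 'M[R]_(N, T))
    (s : 'S_N) (gamma : R) (ot : op_type) (h : 'I_J -> R -> R) (rho : R -> R) :
  0 < gamma ->
  0 < largest_eig (sample_cov X) ->
  (forall (U : 'cV[R]_N -> 'cV[R]_N),
      (forall (s' : 'S_N) (y : 'cV[R]_N), U (perm_mx s' *m y) = perm_mx s' *m U y) ->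
      forall x : 'cV[R]_N,
        cst (perm_mx s *m X) gamma ot h L rho U (perm_mx s *m x)
        = cst_perm (cst X gamma ot h L rho U x) (perm_mx s))
  /\
  (forall (M : nat) (U : 'cV[R]_N -> 'cV[R]_M),
      (forall (s' : 'S_N) (y : 'cV[R]_N), U (perm_mx s' *m y) = U y) ->
      forall x : 'cV[R]_N,
        cst (perm_mx s *m X) gamma ot h L rho U (perm_mx s *m x)
        = cst X gamma ot h L rho U x).
Proof.
move=> _ _.
have Pi_orth := perm_mx_orthogonal R s.
have rho_Pi (y : 'cV[R]_N) := map_mx_perm s rho y.
split=> [U U_equiv x | M U U_inv x].
  exact: cst_conj Pi_orth rho_Pi (U_equiv s).
by rewrite -[RHS]map_id; exact: cst_conj Pi_orth rho_Pi (U_inv s).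
Qed.
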